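(* Let $Z=\operatorname{diag}(z_1,\dots,z_N)$ with distinct real $z_i$, and let $\bm w_1,\bm w_2,\bm v_1\in\mathbb{R}^N$ satisfy $\bm w_1^T\bm v_1=1$, $\bm w_2^T\bm v_1=0$, $\bm w_2^TZ\bm v_1=1$. Suppose there exist $V=[\bm v_1,\dots,\bm v_N]$, $W=[\bm w_1,\dots,\bm w_N]\in\mathbb{R}^{N\times N}$ (with the given first columns $\bm v_1$ and $\bm w_1,\bm w_2$) and $H\in\mathbb{R}^{N\times N}$ with $H_{i,i}=b_{i-1}$, $H_{i+1,i}=1$, $H_{i,i+1}=c_i$, $H_{i,i+2}=d_{i+1}$ and all other entries zero, such that $W^TZV=H$ and $W^TV=I_N$. Assume moreover $d_n\neq0$ for $n=2,\dots,N-1$. Then for every $m\le N$, $\{\bm v_i\}_{i=1}^m$ is a basis of $\mathcal K_m(Z,\bm v_1)$ and $\{\bm w_i\}_{i=1}^m$ is a basis of $\mathcal K_m^{\square}(Z,[\bm w_1,\bm w_2])$.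
   Context: Krylov subspace: $\mathcal K_m(M,\bm v)=\operatorname{span}\{\bm v,M\bm v,\dots,M^{m-1}\bm v\}$. Block Krylov subspace with two starting vectors: $\mathcal K_m^{\square}(M,[\bm w_1,\bm w_2])=\mathcal K_k(M,\bm w_1)+\mathcal K_k(M,\bm w_2)$ if $m=2k$, and $=\mathcal K_{k+1}(M,\bm w_1)+\mathcal K_k(M,\bm w_2)$ if $m=2k+1$ (with $\mathcal K_0=\{0\}$). *)

From HB Require Import structures.
From mathcomp Require Import all_boot all_order all_algebra.
Set Implicit Arguments. Unset Strict Implicit. Unset Printing Implicit Defensive.
Import Order.TTheory GRing.Theory Num.Theory.
Local Open Scope ring_scope.

Section Krylov.
Variables (R : fieldType) (N : nat).

(* The m x N matrix whose i-th row is (M^i v)^T, i = 0..m-1; its row space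
   (mxalgebra, %MS) is the Krylov subspace K_m(M, v). *)
Definition krylov (M : 'M[R]_N) (v : 'cV[R]_N) (m : nat) : 'M[R]_(m, N) :=
  \matrix_(i < m) (M ^+ i *m v)^T.

(* Block Krylov subspace K_m^box(M,[w1,w2]) = K_{ceil(m/2)}(M,w1) + K_{floor(m/2)}(M,w2),
   given as a matrix whose rows span it. *)
Definition block_krylov (M : 'M[R]_N) (w1 w2 : 'cV[R]_N) (m : nat)
  : 'M[R]_(uphalf m + m./2, N) :=
  col_mx (krylov M w1 (uphalf m)) (krylov M w2 m./2).

Definition firstcols (m : nat) (hm : (m <= N)%N) (A : 'M[R]_N) : 'M[R]_(m, N) :=
  rowsub (widen_ord hm) A^T.

Definition is_basis_of (m k : nat) (B : 'M[R]_(m, N)) (S : 'M[R]_(k, N)) : Prop :=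
  row_free B /\ (B == S)%MS.

End Krylov.

From HB Require Import structures.
From mathcomp Require Import all_boot all_order all_algebra.
Import Order.TTheory GRing.Theory Num.Theory.
Local Open Scope ring_scope.
From mathcomp Require Import zify.

Set Implicit Arguments.
Unset Strict Implicit.
Unset Printing Implicit Defensive.

(* The biorthogonality W^T V = 1 turns W^T Z V = H into the recurrences
   V^T Z = H^T V^T and W^T Z = H W^T.  Since H is upper Hessenberg with unit
   subdiagonal, v_{j+1} is Z v_j minus a combination of v_1..v_j, so the v_i
   stay in the Krylov space of v_1; since H_{j,j+2} = d_{j+2} != 0, w_{j+2} is
   likewise obtained from Z w_j and w_1..w_{j+1}, and every step raises the
   index of the block Krylov space by two.  The first m columns are linearly
   independent (again by biorthogonality) and the spaces have dimension at
   most m, hence they are bases. *)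

Section BandedRecurrence.
Variables (R : fieldType) (N s : nat) (A K Z : 'M[R]_N).
Variables (r : nat -> nat) (G : forall m, 'M[R]_(r m, N)).
Hypothesis AZ : A *m Z = K *m A.
Hypothesis s_gt0 : (0 < s)%N.
Hypothesis K_band : forall j i : 'I_N, (j + s < i)%N -> K j i = 0.
Hypothesis K_lead : forall j i : 'I_N, (i : nat) = (j + s)%N -> K j i != 0.
Hypothesis G_mono : forall m, (G m <= G m.+1)%MS.
Hypothesis G_mulZ : forall m, (G m *m Z <= G (m + s))%MS.
Hypothesis row_init : forall i : 'I_N, (i < s)%N -> (row i A <= G i.+1)%MS.

Lemma chain_le m n : (m <= n)%N -> (G m <= G n)%MS.
Proof.
move=> /subnK <-; elim: (n - m)%N => [|k IH] //.
by rewrite addSn; apply: submx_trans IH (G_mono _).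
Qed.

Lemma row_mul_recurrence j : row j A *m Z = \sum_i K j i *: row i A.
Proof. by rewrite -row_mul AZ row_mul mulmx_sum_row; under eq_bigr do rewrite mxE. Qed.

Lemma row_sub_chain (i : 'I_N) : (row i A <= G i.+1)%MS.
Proof.
have [k] := ubnP i; elim: k i => // k IH i /ltnSE le_ik.
have [lt_is | le_si] := ltnP i s; first exact: row_init.
pose j := Ordinal (leq_ltn_trans (leq_subr s i) (ltn_ord i)).
have ij : (i : nat) = (j + s)%N by rewrite /= subnK.
have lt_ji : (j < i)%N by rewrite ij -addn1 leq_add2l.
(* Solve the j-th recurrence for its leading term, the one with index i. *)
have -> : row i A = (K j i)^-1 *:
    (row j A *m Z - \sum_(l | l != i) K j l *: row l A).
  by rewrite row_mul_recurrence (bigD1 i) //= addrK scalerA mulVf ?scale1r ?K_lead.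
apply/scalemx_sub/addmx_sub.
  apply: submx_trans (submxMr Z (IH j (leq_trans lt_ji le_ik))) _.
  have -> : i.+1 = (j.+1 + s)%N by rewrite ij addSn.
  exact: G_mulZ.
rewrite -scaleN1r; apply/scalemx_sub/summx_sub => l ne_li.
have [le_ls | lt_sl] := leqP l (j + s); last by rewrite K_band ?scale0r ?sub0mx.
have lt_li : (l < i)%N by rewrite ltn_neqAle ij le_ls andbT -ij val_eqE ne_li.
apply/scalemx_sub/(submx_trans (IH l (leq_trans lt_li le_ik))).
exact: (@chain_le l.+1 i.+1 (ltnW lt_li)).
Qed.

Lemma row_sub_chain_le m (i : 'I_N) : (i < m)%N -> (row i A <= G m)%MS.
Proof. by move=> lt_im; apply: submx_trans (row_sub_chain i) (@chain_le i.+1 m lt_im). Qed.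

End BandedRecurrence.

Section FirstRows.
Variables (R : fieldType) (N : nat).

Lemma row_free_rowsub m (f : 'I_m -> 'I_N) (A : 'M[R]_N) :
  injective f -> A \in unitmx -> row_free (rowsub f A).
Proof.
move=> inj_f uA; apply/row_freeP; exists (colsub f (invmx A)).
apply/matrixP => i j; rewrite !mxE.
under eq_bigr do rewrite !mxE.
have := congr1 (fun M : 'M_N => M (f i) (f j)) (mulmxV uA); rewrite !mxE => ->.
by rewrite (inj_eq inj_f).
Qed.

Lemma is_basis_of_rowsub m (hm : (m <= N)%N) k (A : 'M[R]_N) (S : 'M[R]_(k, N)) :
  A \in unitmx -> (forall i : 'I_N, (i < m)%N -> (row i A <= S)%MS) ->
  (\rank S <= m)%N -> is_basis_of (rowsub (widen_ord hm) A) S.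
Proof.
move=> uA rowsS rankS.
have free : row_free (rowsub (widen_ord hm) A).
  by apply: row_free_rowsub uA => i j /(congr1 val) /= /val_inj.
have sub : (rowsub (widen_ord hm) A <= S)%MS.
  by apply/row_subP => i; rewrite row_rowsub; apply: rowsS; exact: (ltn_ord i).
split=> //; rewrite -(geq_leqif (mxrank_leqif_eq sub)).
by move/eqP: free => ->.
Qed.

End FirstRows.

Section KrylovSpaces.
Variables (R : fieldType) (N : nat) (Z : 'M[R]_N).

Lemma krylov_row0_sub v m : (0 < m)%N -> (v^T <= krylov Z v m)%MS.
Proof.
by case: m => // m _; apply: (@eq_row_sub _ _ _ _ _ ord0); rewrite rowK mul1mx.
Qed.

Lemma krylov_mono v a b : (a <= b)%N -> (krylov Z v a <= krylov Z v b)%MS.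
Proof.
move=> le_ab; apply/row_subP => i; rewrite rowK.
by apply: (@eq_row_sub _ _ _ _ _ (widen_ord le_ab i)); rewrite rowK.
Qed.

Lemma block_krylov_w1_sub w1 w2 m : (0 < m)%N -> (w1^T <= block_krylov Z w1 w2 m)%MS.
Proof.
move=> m_gt0; rewrite /block_krylov -addsmxE; apply: submx_trans (addsmxSl _ _).
by apply: krylov_row0_sub; case: m m_gt0.
Qed.

Lemma block_krylov_w2_sub w1 w2 m : (1 < m)%N -> (w2^T <= block_krylov Z w1 w2 m)%MS.
Proof.
move=> m_gt1; rewrite /block_krylov -addsmxE; apply: submx_trans (addsmxSr _ _).
by apply: krylov_row0_sub; case: m m_gt1 => [|[|m]].
Qed.

Lemma block_krylov_mono w1 w2 a b : (a <= b)%N ->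
  (block_krylov Z w1 w2 a <= block_krylov Z w1 w2 b)%MS.
Proof.
move=> le_ab; rewrite /block_krylov -!addsmxE.
exact/addsmxS/krylov_mono/half_leq/le_ab/krylov_mono/uphalf_leq.
Qed.

Lemma block_krylov_rank w1 w2 m : (\rank (block_krylov Z w1 w2 m) <= m)%N.
Proof.
apply: leq_trans (rank_leq_row _) _.
by rewrite uphalf_half -addnA addnn odd_double_half.
Qed.

Hypothesis ZT : Z^T = Z.

(* Right multiplication by a symmetric Z maps the row (Z^i v)^T to (Z^(i+1) v)^T. *)
Lemma krylov_mulZ v a b : (a < b)%N -> (krylov Z v a *m Z <= krylov Z v b)%MS.
Proof.
move=> lt_ab; apply/row_subP => i; rewrite row_mul rowK.
apply: (@eq_row_sub _ _ _ _ _ (Ordinal (leq_ltn_trans (ltn_ord i) lt_ab))).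
by rewrite rowK /= exprS -mulmxE -mulmxA trmx_mul ZT.
Qed.

Lemma block_krylov_mulZ w1 w2 m :
  (block_krylov Z w1 w2 m *m Z <= block_krylov Z w1 w2 (m + 2))%MS.
Proof.
rewrite /block_krylov mul_col_mx -!addsmxE addn2.
by apply/addsmxS; apply: krylov_mulZ.
Qed.

End KrylovSpaces.

Section Pentadiagonal.
Variables (R : fieldType) (N : nat) (b c d : nat -> R).

Definition pentadiag : 'M[R]_N := \matrix_(i < N, j < N)
  (if (j == i :> nat) then b i
   else if (i == j.+1 :> nat) then 1
   else if (j == i.+1 :> nat) then c i.+1
   else if (j == i.+2 :> nat) then d i.+2
   else 0).

Lemma pentadiag_tr_band (j i : 'I_N) : (j + 1 < i)%N -> pentadiag^T j i = 0.
Proof.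
move=> lt_ji; rewrite !mxE.
by do 4 (rewrite ifF; last by apply/negbTE/eqP; lia).
Qed.

Lemma pentadiag_tr_lead (j i : 'I_N) : (i : nat) = (j + 1)%N -> pentadiag^T j i != 0.
Proof.
move=> ij; rewrite !mxE ifF ?ifT ?oner_neq0 //; apply/eqP; lia.
Qed.

Lemma pentadiag_band (j i : 'I_N) : (j + 2 < i)%N -> pentadiag j i = 0.
Proof.
move=> lt_ji; rewrite mxE.
by do 4 (rewrite ifF; last by apply/negbTE/eqP; lia).
Qed.

Lemma pentadiag_lead (j i : 'I_N) :
  (forall n, (2 <= n)%N -> (n <= N.-1)%N -> d n != 0) ->
  (i : nat) = (j + 2)%N -> pentadiag j i != 0.
Proof.
move=> d_neq0 ij; rewrite mxE.
do 3 (rewrite ifF; last by apply/negbTE/eqP; lia).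
rewrite ifT; last by apply/eqP; lia.
by apply: d_neq0; have := ltn_ord i; lia.
Qed.

End Pentadiagonal.

Theorem proposition4p1 (R : realFieldType) (N : nat) (hN : (1 < N)%N)
  (z : 'rV[R]_N) (V W H : 'M[R]_N) (b c d : nat -> R) :
  (* distinct z_i, Z = diag(z_1,...,z_N) *)
  (forall i j : 'I_N, z 0 i = z 0 j -> i = j) ->
  let Z := diag_mx z in
  let v1 := col (Ordinal (ltnW hN)) V in
  let w1 := col (Ordinal (ltnW hN)) W in
  let w2 := col (Ordinal hN) W in
  (w1^T *m v1) 0 0 = 1 ->
  (w2^T *m v1) 0 0 = 0 ->
  (w2^T *m Z *m v1) 0 0 = 1 ->
  (* 0-based: H_{k,k} = b_k, H_{k+1,k} = 1, H_{k,k+1} = c_{k+1}, H_{k,k+2} = d_{k+2} *)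
  H = \matrix_(i < N, j < N)
        (if (j == i :> nat) then b i
         else if (i == j.+1 :> nat) then 1
         else if (j == i.+1 :> nat) then c i.+1
         else if (j == i.+2 :> nat) then d i.+2
         else 0) ->
  W^T *m Z *m V = H ->
  W^T *m V = 1%:M ->
  (forall n : nat, (2 <= n)%N -> (n <= N.-1)%N -> d n != 0) ->
  forall (m : nat) (hm : (m <= N)%N),
    is_basis_of (firstcols hm V) (krylov Z v1 m) /\
    is_basis_of (firstcols hm W) (block_krylov Z w1 w2 m).
Proof.
move=> _ Z v1 w1 w2 _ _ _ defH WZV WV d_neq0 m hm.
rewrite [H]defH -/(pentadiag N b c d) in WZV.
have ZT : Z^T = Z := tr_diag_mx z.
have VW : V *m W^T = 1%:M := mulmx1C WV.
have [uWT uV] := mulmx1_unit WV.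
have uVT : V^T \in unitmx by rewrite unitmx_tr.
have VZ : V^T *m Z = (pentadiag N b c d)^T *m V^T.
  by rewrite -{1}ZT -!trmx_mul -WZV !mulmxA VW mul1mx.
have WZ : W^T *m Z = pentadiag N b c d *m W^T by rewrite -WZV -!mulmxA VW mulmx1.
split; apply: is_basis_of_rowsub => //.
- apply: (row_sub_chain_le (G := krylov Z v1) VZ (s := 1)) => //.
  + exact: pentadiag_tr_band.
  + exact: pentadiag_tr_lead.
  + by move=> n; apply: krylov_mono.
  + by move=> n; apply: krylov_mulZ; rewrite ?addn1.
  + move=> [[|i] lt_iN] // _; rewrite -tr_col.
    by rewrite (bool_irrelevance lt_iN (ltnW hN)); apply: krylov_row0_sub.
- exact: rank_leq_row.
- apply: (row_sub_chain_le (G := block_krylov Z w1 w2) WZ (s := 2)) => //.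
  + exact: pentadiag_band.
  + by move=> j i; apply: pentadiag_lead.
  + by move=> n; apply: block_krylov_mono.
  + exact: block_krylov_mulZ.
  + move=> [[|[|i]] lt_iN] // _; rewrite -tr_col.
      by rewrite (bool_irrelevance lt_iN (ltnW hN)); apply: block_krylov_w1_sub.
    by rewrite (bool_irrelevance lt_iN hN); apply: block_krylov_w2_sub.
- exact: block_krylov_rank.
Qed.
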